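(* Let $G$ be a group and let $(\hat{X},Z)$ be a pair such that: (1) $\hat{X}$ is a compact AR; (2) $\hat{X}$ is a $\mathscr{Z}$-compactification of $X=\hat{X}-Z$; (3) $G$ acts properly and cocompactly on $X$ (not necessarily freely); (4) (nullity condition) for every compact set $C\subseteq X$ and every open cover $\mathscr{U}$ of $\hat{X}$, all but finitely many $G$-translates of $C$ lie in a single element of $\mathscr{U}$. Then $\dim Z<\infty$ (Lebesgue covering dimension).
   Context: All spaces are locally compact, separable and metrizable. A separable metric space is an AR if whenever it is embedded as a closed subset of another separable metric space, its image is a retract of that space; it is an ANR if some neighborhood of the image retracts onto it. A closed subset $A$ of an ANR $Y$ is a $\mathscr{Z}$-set if there is a homotopy $H:Y\times[0,1]\to Y$ with $H_0=\mathrm{id}_Y$ and $H_t(Y)\subset Y-A$ for all $t>0$. A $\mathscr{Z}$-compactification of $Y$ is a compactification $\hat{Y}$ such that $\hat{Y}-Y$ is a $\mathscr{Z}$-set in $\hat{Y}$. A pair as in the claim is a $\mathscr{Z}$-structure on $G$ in the sense of Dranishnikov. *)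

From Stdlib Require Import Reals Lra List ProofIrrelevance.
Open Scope R_scope.

Record MetricSpace := {
  carrier :> Type;
  dist : carrier -> carrier -> R;
  dist_refl : forall x, dist x x = 0;
  dist_sep : forall x y, dist x y = 0 -> x = y;
  dist_sym : forall x y, dist x y = dist y x;
  dist_tri : forall x y z, dist x z <= dist x y + dist y z
}.
Arguments dist {m} _ _.

Section Topology.
Variable M : MetricSpace.

Definition is_open (U : M -> Prop) : Prop :=
  forall x, U x -> exists eps, 0 < eps /\ forall y, dist x y < eps -> U y.

Definition is_closed (A : M -> Prop) : Prop := is_open (fun x => ~ A x).

Definition dense (A : M -> Prop) : Prop :=
  forall x eps, 0 < eps -> exists y, A y /\ dist x y < eps.

Definition separable : Prop :=
  (forall x : M, False) \/
  exists s : nat -> M, dense (fun y => exists n, s n = y).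

Definition compact_set (K : M -> Prop) : Prop :=
  forall (U : (M -> Prop) -> Prop),
    (forall V, U V -> is_open V) ->
    (forall x, K x -> exists V, U V /\ V x) ->
    exists l : list (M -> Prop),
      (forall V, In V l -> U V) /\ (forall x, K x -> exists V, In V l /\ V x).

Definition compact_space : Prop := compact_set (fun _ => True).

Definition open_cover (U : (M -> Prop) -> Prop) : Prop :=
  (forall V, U V -> is_open V) /\ (forall x, exists V, U V /\ V x).

(** Lebesgue covering dimension <= n: every finite open cover has a finite
    open refinement of order <= n+1 (no point lies in n+2 members with
    distinct indices). *)
Definition covering_dim_le (n : nat) : Prop :=
  forall C : list (M -> Prop),
    (forall V, In V C -> is_open V) ->
    (forall x, exists V, In V C /\ V x) ->
    exists D : list (M -> Prop),
      (forall W, In W D -> is_open W) /\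
      (forall x, exists W, In W D /\ W x) /\
      (forall W, In W D -> exists V, In V C /\ forall x, W x -> V x) /\
      (forall idx : list nat,
          NoDup idx -> length idx = S (S n) ->
          (forall i, In i idx -> (i < length D)%nat) ->
          ~ exists x, forall i, In i idx -> nth i D (fun _ => False) x).

Definition finite_dimensional : Prop := exists n, covering_dim_le n.

End Topology.

Arguments is_open {M} _.
Arguments is_closed {M} _.
Arguments dense {M} _.
Arguments compact_set {M} _.
Arguments open_cover {M} _.

Definition continuous {M N : MetricSpace} (f : M -> N) : Prop :=
  forall x eps, 0 < eps ->
    exists delta, 0 < delta /\ forall y, dist x y < delta -> dist (f x) (f y) < eps.

Definition closed_embedding {M N : MetricSpace} (e : M -> N) : Prop :=
  continuous e /\
  (forall x y, e x = e y -> x = y) /\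
  (forall x eps, 0 < eps -> exists delta, 0 < delta /\
      forall y, dist (e x) (e y) < delta -> dist x y < eps) /\
  is_closed (fun y => exists x, e x = y).

(** Absolute retract (for separable metric spaces): whenever M is embedded as a
    closed subset of a separable metric space Y, its image is a retract of Y
    (equivalently a continuous r : Y -> M with r o e = id). *)
Definition AR (M : MetricSpace) : Prop :=
  forall (Y : MetricSpace) (e : M -> Y),
    separable Y -> closed_embedding e ->
    exists r : Y -> Y, continuous r /\
      (forall y, exists x, r y = e x) /\
      (forall x, r (e x) = e x).

Definition Z_set {M : MetricSpace} (A : M -> Prop) : Prop :=
  is_closed A /\
  exists H : M -> R -> M,
    (forall x t eps, 0 <= t <= 1 -> 0 < eps -> exists delta, 0 < delta /\
        forall y s, 0 <= s <= 1 -> dist x y < delta -> Rabs (t - s) < delta ->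
          dist (H x t) (H y s) < eps) /\
    (forall x, H x 0 = x) /\
    (forall x t, 0 < t <= 1 -> ~ A (H x t)).

Section Sub.
Variable M : MetricSpace.
Variable P : M -> Prop.

Definition sub_dist (a b : {x : M | P x}) : R := dist (proj1_sig a) (proj1_sig b).

Lemma sub_refl : forall a, sub_dist a a = 0.
Proof. intros a; apply dist_refl. Qed.

Lemma sub_sep : forall a b, sub_dist a b = 0 -> a = b.
Proof.
  intros [a pa] [b pb] H; unfold sub_dist in H; simpl in H.
  apply dist_sep in H; subst b; f_equal; apply proof_irrelevance.
Qed.

Lemma sub_sym : forall a b, sub_dist a b = sub_dist b a.
Proof. intros; apply dist_sym. Qed.

Lemma sub_tri : forall a b c, sub_dist a c <= sub_dist a b + sub_dist b c.
Proof. intros; apply dist_tri. Qed.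

Definition subspace : MetricSpace :=
  {| carrier := {x : M | P x}; dist := sub_dist;
     dist_refl := sub_refl; dist_sep := sub_sep;
     dist_sym := sub_sym; dist_tri := sub_tri |}.
End Sub.

Definition Z_compactification (Xhat : MetricSpace) (Z : Xhat -> Prop) : Prop :=
  compact_space Xhat /\ dense (fun x => ~ Z x) /\ Z_set Z.

Record Group := {
  gcarrier :> Type;
  gmul : gcarrier -> gcarrier -> gcarrier;
  gone : gcarrier;
  ginv : gcarrier -> gcarrier;
  gmulA : forall a b c, gmul a (gmul b c) = gmul (gmul a b) c;
  gmul1l : forall a, gmul gone a = a;
  gmulVl : forall a, gmul (ginv a) a = gone
}.
Arguments gmul {g} _ _.
Arguments gone {g}.
Arguments ginv {g} _.

Definition is_action (G : Group) (X : MetricSpace) (act : G -> X -> X) : Prop :=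
  (forall x, act gone x = x) /\
  (forall g h x, act (gmul g h) x = act g (act h x)) /\
  (forall g, continuous (act g)).

Definition proper_action (G : Group) (X : MetricSpace) (act : G -> X -> X) : Prop :=
  forall K : X -> Prop, compact_set K ->
    exists l : list G, forall g, (exists x, K x /\ K (act g x)) -> In g l.

Definition cocompact_action (G : Group) (X : MetricSpace) (act : G -> X -> X) : Prop :=
  exists K : X -> Prop, compact_set K /\ forall x, exists g y, K y /\ act g y = x.

(* Push the boundary Z a short time t into X along the Z-set homotopy H and
   cover it by the sets W_h = {z | h.H_t(z) in N}, where N is an open
   neighbourhood of a compact fundamental domain K inside a compact set C.
   Nullity makes all but finitely many translates gC small, and those
   finitely many translates stay a positive distance away from Z; so for t
   small every point of Z lies in a W_h of small diameter, and by a Lebesgue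
   number argument these refine any given cover.  If z lies in W_h for all h
   in a set S, then for a fixed h1 in S the distinct elements h h1^-1 all move
   the point h1.H_t(z) of C back into C, so |S| is bounded by the number of g
   with gC meeting C: finite by properness, and independent of the cover. *)
From Pilot Require Import Defs.
From Stdlib Require Import Reals List FinFun.
From Stdlib Require Import Lra Lia Classical ClassicalEpsilon.
Open Scope R_scope.
Local Notation dist := Defs.dist.

Lemma finite_choice_list {A B : Type} (Rel : A -> B -> Prop) (l : list A) :
  (forall a, In a l -> exists b, Rel a b) ->
  exists lb, (forall a, In a l -> exists b, In b lb /\ Rel a b) /\
             (forall b, In b lb -> exists a, In a l /\ Rel a b).
Proof.
  induction l as [|a l IH]; intros Hl.
  - exists nil; split; intros x [].
  - destruct IH as [lb [H1 H2]]; [intros; apply Hl; right; auto|].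
    destruct (Hl a (or_introl eq_refl)) as [b Hb].
    exists (b :: lb); split.
    + intros x [<-|Hx]; [exists b; split; [left|]; auto|].
      destruct (H1 x Hx) as [b' [? ?]]; exists b'; split; [right|]; auto.
    + intros y [<-|Hy]; [exists a; split; [left|]; auto|].
      destruct (H2 y Hy) as [a' [? ?]]; exists a'; split; [right|]; auto.
Qed.

Lemma list_min_pos {A : Type} (l : list A) (Q : A -> R -> Prop) :
  (forall a r r', 0 < r' <= r -> Q a r -> Q a r') ->
  (forall a, In a l -> exists r, 0 < r /\ Q a r) ->
  exists r, 0 < r /\ forall a, In a l -> Q a r.
Proof.
  intros Hmono. induction l as [|a l IH]; intros Hl.
  - exists 1; split; [lra | intros a []].
  - destruct IH as [r [Hr Hrl]]; [intros; apply Hl; right; auto|].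
    destruct (Hl a (or_introl eq_refl)) as [r' [Hr' Ha]].
    pose proof (Rmin_l r r'); pose proof (Rmin_r r r'); pose proof (Rmin_pos r r' Hr Hr').
    exists (Rmin r r'); split; [auto|].
    intros b [<-|Hb]; [apply Hmono with r' | apply Hmono with r]; auto; lra.
Qed.

Section MetricFacts.
Variable M : MetricSpace.

Lemma ball_open (c : M) (e : R) : is_open (fun y => dist c y < e).
Proof.
  intros x Hx. exists (e - dist c x); split; [lra|].
  intros y Hy. pose proof (Defs.dist_tri M c x y). lra.
Qed.

Lemma closed_ball_closed (c : M) (e : R) : is_closed (fun y => dist c y <= e).
Proof.
  intros x Hx. exists (dist c x - e); split; [lra|].
  intros y Hy Hle. pose proof (Defs.dist_tri M c y x). rewrite (Defs.dist_sym M y x) in *. lra.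
Qed.

Lemma open_list_union {A : Type} (l : list A) (B : A -> M -> Prop) :
  (forall a, In a l -> is_open (B a)) -> is_open (fun y => exists a, In a l /\ B a y).
Proof.
  intros Hop x [a [Ha Bx]]. destruct (Hop a Ha x Bx) as [e [He Hb]].
  exists e; split; [auto|]. intros y Hy; exists a; auto.
Qed.

Lemma closed_list_union {A : Type} (l : list A) (B : A -> M -> Prop) :
  (forall a, In a l -> is_closed (B a)) -> is_closed (fun y => exists a, In a l /\ B a y).
Proof.
  induction l as [|a l IH]; intros Hcl x Hx.
  - exists 1; split; [lra|]. intros y _ [b [[] _]].
  - destruct (Hcl a (or_introl eq_refl) x) as [e1 [He1 H1]].
    { intros Bx; apply Hx; exists a; split; [left|]; auto. }
    destruct (IH (fun b Hb => Hcl b (or_intror Hb)) x) as [e2 [He2 H2]].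
    { intros [b [Hb Bx]]; apply Hx; exists b; split; [right|]; auto. }
    pose proof (Rmin_l e1 e2); pose proof (Rmin_r e1 e2).
    exists (Rmin e1 e2); split; [apply Rmin_pos; auto|].
    intros y Hy [b [[<-|Hb] By]].
    + apply (H1 y); [lra | auto].
    + apply (H2 y); [lra | exists b; auto].
Qed.

Lemma compact_indexed_subcover {A : Type} (K : M -> Prop) (P : A -> Prop) (W : A -> M -> Prop) :
  compact_set K -> (forall a, P a -> is_open (W a)) ->
  (forall x, K x -> exists a, P a /\ W a x) ->
  exists l : list A, (forall a, In a l -> P a) /\ (forall x, K x -> exists a, In a l /\ W a x).
Proof.
  intros HK HW Hcov.
  destruct (HK (fun V => exists a, P a /\ V = W a)) as [lV [HlV HlVc]].
  - intros V [a [Pa ->]]; auto.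
  - intros x Kx; destruct (Hcov x Kx) as [a [Pa Wx]]; exists (W a); eauto.
  - destruct (finite_choice_list (fun V a => P a /\ V = W a) lV) as [la [H1 H2]].
    { intros V HV; destruct (HlV V HV) as [a ?]; eauto. }
    exists la; split.
    + intros a Ha; destruct (H2 a Ha) as [? [_ [? _]]]; auto.
    + intros x Kx; destruct (HlVc x Kx) as [V [HV Vx]].
      destruct (H1 V HV) as [a [Ha [_ ->]]]; eauto.
Qed.

Lemma compact_ball_subcover (K : M -> Prop) (P : M -> R -> Prop) :
  compact_set K -> (forall k, K k -> exists e, 0 < e /\ P k e) ->
  exists l : list (M * R),
    (forall q, In q l -> K (fst q) /\ 0 < snd q /\ P (fst q) (snd q)) /\
    (forall x, K x -> exists q, In q l /\ dist (fst q) x < snd q).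
Proof.
  intros HK HP.
  apply (compact_indexed_subcover K (fun q => K (fst q) /\ 0 < snd q /\ P (fst q) (snd q))
           (fun q y => dist (fst q) y < snd q) HK).
  - intros q _; apply ball_open.
  - intros x Kx; destruct (HP x Kx) as [e [He Pe]].
    exists (x, e); simpl; rewrite Defs.dist_refl; auto.
Qed.

Lemma compact_uniform_of_local (K : M -> Prop) (Q : M -> R -> Prop) :
  compact_set K ->
  (forall x r r', 0 < r' <= r -> Q x r -> Q x r') ->
  (forall k, K k -> exists d r, 0 < d /\ 0 < r /\ forall x, K x -> dist k x < d -> Q x r) ->
  exists r, 0 < r /\ forall x, K x -> Q x r.
Proof.
  intros HK Hmono Hloc.
  destruct (compact_ball_subcover K
    (fun k d => exists r, 0 < r /\ forall x, K x -> dist k x < d -> Q x r) HK)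
    as [l [Hl Hlc]].
  { intros k Kk; destruct (Hloc k Kk) as [d [r [Hd [Hr Hq]]]]; eauto. }
  destruct (list_min_pos l (fun q r => forall x, K x -> dist (fst q) x < snd q -> Q x r))
    as [r [Hr Hrl]].
  - intros q r r' Hrr Hq x Kx Hx; apply Hmono with r; auto.
  - intros q Hq; apply (Hl q Hq).
  - exists r; split; [auto|]. intros x Kx.
    destruct (Hlc x Kx) as [q [Hq Hx]]; apply (Hrl q Hq); auto.
Qed.

Lemma lebesgue_number (Cl : list (M -> Prop)) :
  compact_space M -> (forall V, In V Cl -> is_open V) -> (forall x, exists V, In V Cl /\ V x) ->
  exists lam, 0 < lam /\
    forall z, exists V, In V Cl /\ forall z', dist z z' < lam -> V z'.
Proof.
  intros HM Hop Hcov.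
  destruct (compact_uniform_of_local (fun _ => True)
    (fun z r => exists V, In V Cl /\ forall z', dist z z' < r -> V z') HM)
    as [lam [Hlam Hl]].
  - intros z r r' Hr [V [HV Hb]]; exists V; split; [auto|]; intros z' Hz'; apply Hb; lra.
  - intros z _. destruct (Hcov z) as [V [HV Vz]]. destruct (Hop V HV z Vz) as [e [He Hb]].
    exists (e / 2), (e / 2); split; [lra | split; [lra|]].
    intros x _ Hx; exists V; split; [auto|]. intros z' Hz'.
    apply Hb. pose proof (Defs.dist_tri M z x z'). lra.
  - exists lam; split; [auto|]; intros z; apply Hl; auto.
Qed.

Lemma closed_compact (A : M -> Prop) : compact_space M -> is_closed A -> compact_set A.
Proof.
  intros HM Hcl U HU Hcov.
  destruct (compact_indexed_subcover (fun _ => True) (fun V => U V \/ V = fun x => ~ A x)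
              (fun V => V) HM) as [l [Hl Hlc]].
  - intros V [HV | ->]; auto.
  - intros x _. destruct (classic (A x)) as [Ax | nAx].
    + destruct (Hcov x Ax) as [V [? ?]]; exists V; auto.
    + exists (fun x => ~ A x); auto.
  - exists (filter (fun V => if excluded_middle_informative (U V) then true else false) l).
    split.
    + intros V HV; apply filter_In in HV as [_ HV].
      destruct (excluded_middle_informative (U V)); [auto | discriminate].
    + intros x Ax. destruct (Hlc x I) as [V [HV Vx]].
      destruct (Hl V HV) as [UV | ->]; [|contradiction].
      exists V; split; [|auto]. apply filter_In; split; [auto|].
      destruct (excluded_middle_informative (U V)); [auto | contradiction].
Qed.

Lemma compact_in_subspace (P A : M -> Prop) :
  compact_set A -> (forall y, A y -> P y) ->
  @compact_set (subspace M P) (fun x => A (proj1_sig x)).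
Proof.
  intros HA HAP U HU Hcov.
  destruct (compact_indexed_subcover A
     (fun p : (subspace M P -> Prop) * (M * R) =>
        U (fst p) /\ forall x : subspace M P, dist (fst (snd p)) (proj1_sig x) < snd (snd p) -> fst p x)
     (fun p y => dist (fst (snd p)) y < snd (snd p)) HA) as [l [Hl Hlc]].
  - intros p _; apply ball_open.
  - intros y Ay. destruct (Hcov (exist _ y (HAP y Ay)) Ay) as [V [UV Vy]].
    destruct (HU V UV _ Vy) as [e [He Hb]].
    exists (V, (y, e)); simpl; rewrite Defs.dist_refl; split; [split; [auto | exact Hb] | auto].
  - exists (map fst l); split.
    + intros V HV; apply in_map_iff in HV as [p [<- Hp]]; apply Hl; auto.
    + intros x Ax; destruct (Hlc _ Ax) as [p [Hp Hd]].
      exists (fst p); split; [apply in_map; auto | apply (Hl p Hp); exact Hd].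
Qed.

Lemma compact_subspace (A : M -> Prop) : compact_set A -> compact_space (subspace M A).
Proof.
  intros HA U HU Hcov.
  destruct (compact_in_subspace A A HA (fun y Ay => Ay) U HU) as [l [Hl Hlc]].
  - intros x _; apply Hcov; auto.
  - exists l; split; [auto|]. intros x _; apply Hlc, proj2_sig.
Qed.

Lemma compact_image_uniform_nbhd {N : MetricSpace} (f : M -> N) (K : M -> Prop) (U : N -> Prop) :
  continuous f -> compact_set K -> is_open U -> (forall x, K x -> U (f x)) ->
  exists r, 0 < r /\ forall x y, K x -> dist (f x) y < r -> U y.
Proof.
  intros Hf HK HU HKU.
  destruct (compact_uniform_of_local K (fun x r => forall y, dist (f x) y < r -> U y) HK)
    as [r [Hr Hrx]].
  - intros x r r' Hrr Hx y Hy; apply Hx; lra.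
  - intros k Kk. destruct (HU _ (HKU k Kk)) as [e [He Hb]].
    destruct (Hf k (e / 2)) as [d [Hd Hdb]]; [lra|].
    exists d, (e / 2); split; [auto | split; [lra|]].
    intros x _ Hx y Hy. apply Hb.
    pose proof (Hdb x Hx); pose proof (Defs.dist_tri N (f k) (f x) y). lra.
  - exists r; split; [auto|]. intros x y Kx; apply Hrx; auto.
Qed.

(* The continuity clause of [Z_set]. *)
Definition homotopy_continuous (H : M -> R -> M) : Prop :=
  forall x t eps, 0 <= t <= 1 -> 0 < eps -> exists delta, 0 < delta /\
    forall y s, 0 <= s <= 1 -> dist x y < delta -> Rabs (t - s) < delta ->
      dist (H x t) (H y s) < eps.

Lemma homotopy_uniformly_close (A : M -> Prop) (H : M -> R -> M) :
  compact_set A -> homotopy_continuous H -> (forall x, H x 0 = x) ->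
  forall eta, 0 < eta -> exists t, 0 < t <= 1 /\ forall a, A a -> dist a (H a t) < eta.
Proof.
  intros HA Hcont H0 eta Heta.
  destruct (compact_uniform_of_local A
    (fun x r => forall s, 0 <= s <= 1 -> s < r -> dist x (H x s) < eta) HA) as [r [Hr Hrx]].
  - intros x r r' Hrr Hx s Hs Hsr; apply Hx; lra.
  - intros k _. destruct (Hcont k 0 (eta / 2)) as [d [Hd Hdb]]; [lra | lra |].
    pose proof (Rmin_l d (eta / 2)); pose proof (Rmin_r d (eta / 2)).
    exists (Rmin d (eta / 2)), d; split; [apply Rmin_pos; lra | split; [auto|]].
    intros x _ Hx s Hs Hsd.
    assert (Hks : dist k (H x s) < eta / 2).
    { rewrite <- (H0 k) at 1. apply Hdb; [auto | lra |].
      rewrite Rabs_minus_sym, Rminus_0_r, Rabs_right; lra. }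
    pose proof (Defs.dist_tri M x k (H x s)). rewrite (Defs.dist_sym M x k) in *. lra.
  - pose proof (Rmin_l 1 (r / 2)); pose proof (Rmin_r 1 (r / 2)).
    exists (Rmin 1 (r / 2)); split; [split; [apply Rmin_pos|]; lra|].
    intros a Aa; apply (Hrx a Aa); [split; [apply Rlt_le, Rmin_pos|] |]; lra.
Qed.

End MetricFacts.

Lemma compact_nbhd_in_open_subspace (M : MetricSpace) (P : M -> Prop) (K : subspace M P -> Prop) :
  compact_space M -> is_open P -> compact_set K ->
  exists N C : subspace M P -> Prop,
    is_open N /\ compact_set C /\ (forall x, K x -> N x) /\ (forall x, N x -> C x).
Proof.
  intros HM HP HK.
  destruct (compact_ball_subcover _ K
    (fun k e => forall y : M, dist (proj1_sig k) y <= e -> P y) HK) as [L [HL HLc]].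
  { intros k _. destruct (HP _ (proj2_sig k)) as [e [He Hb]].
    exists (e / 2); split; [lra|]. intros y Hy; apply Hb; lra. }
  set (A := fun y : M => exists q, In q L /\ dist (proj1_sig (fst q)) y <= snd q).
  assert (HAP : forall y, A y -> P y).
  { intros y [q [Hq Hd]]; apply (HL q Hq); auto. }
  exists (fun x => exists q, In q L /\ dist (fst q) x < snd q), (fun x => A (proj1_sig x)).
  split; [|split; [|split]].
  - apply open_list_union; intros q _; apply ball_open.
  - apply compact_in_subspace; [|auto].
    apply closed_compact; [auto|]. apply closed_list_union; intros q _; apply closed_ball_closed.
  - exact HLc.
  - intros x [q [Hq Hd]]; exists q; split; [exact Hq | apply Rlt_le; exact Hd].
Qed.


Section GroupFacts.
Variable G : Group.

Lemma mulgV (g : G) : gmul g (ginv g) = gone.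
Proof.
  transitivity (gmul (gmul (ginv (ginv g)) (ginv g)) (gmul g (ginv g))).
  { rewrite gmulVl, gmul1l; reflexivity. }
  rewrite <- gmulA, (gmulA G (ginv g) g), gmulVl, gmul1l. apply gmulVl.
Qed.

Lemma mulg1 (g : G) : gmul g gone = g.
Proof. rewrite <- (gmulVl G g), gmulA, mulgV. apply gmul1l. Qed.

Lemma mulg_rcancel (h : G) : Injective (fun g => gmul g h).
Proof.
  intros a b E. rewrite <- (mulg1 a), <- (mulg1 b), <- (mulgV h), !gmulA. rewrite E; reflexivity.
Qed.

Lemma translates_meeting_length {X : Type} (act : G -> X -> X) (C : X -> Prop)
    (lP : list G) (hs : list G) (x : X) :
  (forall g h y, act (gmul g h) y = act g (act h y)) ->
  (forall g, (exists y, C y /\ C (act g y)) -> In g lP) ->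
  NoDup hs -> (forall h, In h hs -> C (act h x)) -> (length hs <= length lP)%nat.
Proof.
  intros Hmul HlP Hnd HC. destruct hs as [|h1 hs']; [simpl; lia|].
  rewrite <- (length_map (fun h => gmul h (ginv h1))).
  apply NoDup_incl_length; [apply Injective_map_NoDup; [apply mulg_rcancel | auto]|].
  intros e He; apply in_map_iff in He as [h [<- Hh]].
  apply HlP; exists (act h1 x); split; [apply HC; left; auto|].
  rewrite <- Hmul, <- gmulA, gmulVl, mulg1. apply HC; auto.
Qed.

End GroupFacts.

Lemma covering_dim_le_of_labelled_refinements (M : MetricSpace) (A : Type) (n : nat) :
  (forall Cl : list (M -> Prop),
    (forall V, In V Cl -> is_open V) -> (forall x, exists V, In V Cl /\ V x) ->
    exists (W : A -> M -> Prop) (l : list A),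
      (forall a, In a l -> is_open (W a)) /\
      (forall x, exists a, In a l /\ W a x) /\
      (forall a, In a l -> exists V, In V Cl /\ forall x, W a x -> V x) /\
      (forall hs x, NoDup hs -> incl hs l -> (forall a, In a hs -> W a x) ->
         (length hs <= S n)%nat)) ->
  covering_dim_le M n.
Proof.
  intros Href Cl HClo HClc.
  destruct (Href Cl HClo HClc) as [W [l [Hop [Hcov [Hsub Hord]]]]].
  set (gl := nodup (fun a b => excluded_middle_informative (a = b)) l).
  assert (Hgl : forall a, In a gl <-> In a l) by (intros; apply nodup_In).
  exists (map W gl); split; [|split; [|split]].
  - intros V HV; apply in_map_iff in HV as [a [<- Ha]]; apply Hop, Hgl; auto.
  - intros x; destruct (Hcov x) as [a [Ha Wx]].
    exists (W a); split; [apply in_map, Hgl|]; auto.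
  - intros V HV; apply in_map_iff in HV as [a [<- Ha]]; apply Hsub, Hgl; auto.
  - intros idx Hnd Hlen Hidx [x Hx]. rewrite length_map in Hidx.
    destruct gl as [|a0 gl'] eqn:Egl.
    { destruct idx as [|i idx]; [discriminate|]. specialize (Hidx i (or_introl eq_refl)).
      simpl in Hidx; lia. }
    rewrite <- Egl in *.
    set (hs := map (fun i => nth i gl a0) idx).
    assert (Hhs : (length hs <= S n)%nat).
    { apply (Hord hs x).
      - apply NoDup_map_NoDup_ForallPairs; [|auto]. intros i j Hi Hj.
        apply (proj1 (NoDup_nth gl a0) (NoDup_nodup _ l)); auto.
      - intros a Ha; apply in_map_iff in Ha as [i [<- Hi]]; apply Hgl, nth_In; auto.
      - intros a Ha; apply in_map_iff in Ha as [i [<- Hi]].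
        specialize (Hx i Hi). rewrite (nth_indep _ _ (W a0)) in Hx by (rewrite length_map; auto).
        rewrite map_nth in Hx; exact Hx. }
    unfold hs in Hhs; rewrite length_map in Hhs; lia.
Qed.

Section BoundaryDimension.
Variables (G : Group) (Xhat : MetricSpace) (Z : Xhat -> Prop).
Local Notation X := (subspace Xhat (fun x => ~ Z x)).
Variable act : G -> X -> X.
Hypotheses (act_one : forall x, act gone x = x)
  (act_mul : forall g h x, act (gmul g h) x = act g (act h x))
  (act_cont : forall g, continuous (act g)).
Hypotheses (Xhat_compact : compact_space Xhat) (Z_closed : is_closed Z).
Variable H : Xhat -> R -> Xhat.
Hypotheses (H_cont : homotopy_continuous Xhat H) (H_0 : forall x, H x 0 = x)
  (H_off_Z : forall x t, 0 < t <= 1 -> ~ Z (H x t)).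
Variables (K N C : X -> Prop) (lP : list G).
Hypotheses (K_translates_cover : forall x, exists g y, K y /\ act g y = x)
  (K_N : forall x, K x -> N x) (N_open : is_open N) (N_C : forall x, N x -> C x)
  (C_compact : compact_set C)
  (lP_proper : forall g, (exists x, C x /\ C (act g x)) -> In g lP)
  (C_null : forall U, open_cover U -> exists l : list G, forall g, ~ In g l ->
     exists V, U V /\ forall c, C c -> V (proj1_sig (act g c))).

Lemma null_translates_small (r : R) : 0 < r ->
  exists l : list G, forall g, ~ In g l ->
    exists a, forall c, C c -> dist a (proj1_sig (act g c)) < r.
Proof.
  intros Hr. destruct (C_null (fun V => exists a, V = fun y => dist a y < r)) as [l Hl].
  - split; [intros V [a ->]; apply ball_open|].
    intros x; exists (fun y => dist x y < r); split; [exists x; auto|].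
    rewrite Defs.dist_refl; auto.
  - exists l; intros g Hg; destruct (Hl g Hg) as [V [[a ->] HV]]; eauto.
Qed.

Lemma translates_avoid_Z (l : list G) :
  exists rho, 0 < rho /\
    forall g c y, In g l -> C c -> dist (proj1_sig (act g c)) y < rho -> ~ Z y.
Proof.
  destruct (list_min_pos l (fun g rho =>
    forall c y, C c -> dist (proj1_sig (act g c)) y < rho -> ~ Z y)) as [rho [Hrho Hl]].
  - intros g r r' Hr Hg c y Cc Hy; apply (Hg c y Cc); lra.
  - intros g _. apply (compact_image_uniform_nbhd X (fun c => proj1_sig (act g c)) C);
      [exact (act_cont g) | auto | exact Z_closed |].
    intros c _; exact (proj2_sig (act g c)).
  - exists rho; split; [auto|]. intros g c y Hg; apply Hl; auto.
Qed.

Section Pushed.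
Variable t : R.
Hypothesis t_range : 0 < t <= 1.

Definition push (z : subspace Xhat Z) : X :=
  exist _ (H (proj1_sig z) t) (H_off_Z (proj1_sig z) t t_range).

Definition push_cover (h : G) (z : subspace Xhat Z) : Prop := N (act h (push z)).

Lemma push_cover_open (h : G) : is_open (push_cover h).
Proof.
  intros z Wz. destruct (N_open _ Wz) as [e [He Hb]].
  destruct (act_cont h (push z) e He) as [d [Hd Hdb]].
  destruct (H_cont (proj1_sig z) t d ltac:(lra) Hd) as [d' [Hd' Hdb']].
  exists d'; split; [auto|]. intros z' Hz'. apply Hb, Hdb.
  apply Hdb'; [lra | exact Hz' | rewrite Rminus_diag, Rabs_R0; lra].
Qed.

Lemma push_cover_of_translate (g : G) (y : X) (z : subspace Xhat Z) :
  K y -> act g y = push z -> push_cover (ginv g) z.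
Proof.
  intros Ky Ey. unfold push_cover. rewrite <- Ey, <- act_mul, gmulVl, act_one; auto.
Qed.

Lemma push_cover_order (hs : list G) (z : subspace Xhat Z) :
  NoDup hs -> (forall h, In h hs -> push_cover h z) -> (length hs <= length lP)%nat.
Proof.
  intros Hnd Hz. apply (translates_meeting_length G act C lP hs (push z)); auto.
  intros h Hh; apply N_C, Hz; auto.
Qed.

Variable eta : R.
Hypothesis push_close : forall z : subspace Xhat Z, dist (proj1_sig z) (H (proj1_sig z) t) < eta.

Lemma push_cover_small (g : G) (a : Xhat) (r : R) :
  (forall c, C c -> dist a (proj1_sig (act g c)) < r) ->
  forall z z', push_cover (ginv g) z -> push_cover (ginv g) z' -> dist z z' < 2 * eta + 2 * r.
Proof.
  intros Ha.
  assert (Hnear : forall z, push_cover (ginv g) z -> dist a (H (proj1_sig z) t) < r).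
  { intros z Wz. specialize (Ha _ (N_C _ Wz)). rewrite <- act_mul, mulgV, act_one in Ha. exact Ha. }
  intros z z' Wz Wz'.
  pose proof (Hnear z Wz); pose proof (Hnear z' Wz').
  pose proof (push_close z); pose proof (push_close z').
  pose proof (Defs.dist_tri _ (proj1_sig z) (H (proj1_sig z) t) (proj1_sig z')).
  pose proof (Defs.dist_tri _ (H (proj1_sig z) t) a (proj1_sig z')).
  pose proof (Defs.dist_tri _ a (H (proj1_sig z') t) (proj1_sig z')).
  rewrite (Defs.dist_sym _ (H (proj1_sig z) t) a), (Defs.dist_sym _ (H (proj1_sig z') t)) in *.
  change (dist z z') with (dist (proj1_sig z) (proj1_sig z')). lra.
Qed.

Lemma push_translate_notin (l : list G) (rho : R) (g : G) (y : X) (z : subspace Xhat Z) :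
  eta <= rho ->
  (forall g c y, In g l -> C c -> dist (proj1_sig (act g c)) y < rho -> ~ Z y) ->
  K y -> act g y = push z -> ~ In g l.
Proof.
  intros Heta Hrho Ky Ey Hg. apply (Hrho g y (proj1_sig z) Hg (N_C _ (K_N _ Ky))).
  - rewrite Ey, Defs.dist_sym. specialize (push_close z). simpl in *. lra.
  - exact (proj2_sig z).
Qed.

End Pushed.

Lemma boundary_covering_dim_le : covering_dim_le (subspace Xhat Z) (length lP).
Proof.
  apply covering_dim_le_of_labelled_refinements with (A := G).
  intros Cl HClo HClc.
  assert (Z_compact : compact_set Z) by (apply closed_compact; auto).
  destruct (lebesgue_number _ Cl (compact_subspace _ Z Z_compact) HClo HClc) as [lam [Hlam Leb]].
  destruct (null_translates_small (lam / 4)) as [l Hl]; [lra|].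
  destruct (translates_avoid_Z l) as [rho [Hrho Hrhol]].
  pose proof (Rmin_l rho (lam / 8)); pose proof (Rmin_r rho (lam / 8)).
  set (eta := Rmin rho (lam / 8)) in *.
  destruct (homotopy_uniformly_close _ Z H Z_compact H_cont H_0 eta) as [t [Ht Htz]];
    [apply Rmin_pos; lra|].
  assert (close : forall z : subspace Xhat Z, dist (proj1_sig z) (H (proj1_sig z) t) < eta)
    by (intros z; apply Htz, proj2_sig).
  set (small := fun h => exists V, In V Cl /\ forall z, push_cover t Ht h z -> V z).
  destruct (compact_indexed_subcover _ (fun _ => True) small (push_cover t Ht)
              (compact_subspace _ Z Z_compact)) as [hs [Hhs Hhsc]].
  - intros h _; apply push_cover_open.
  - intros z _. destruct (K_translates_cover (push t Ht z)) as [g [y [Ky Ey]]].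
    exists (ginv g); split; [|apply (push_cover_of_translate t Ht g y); auto].
    destruct (Hl g (push_translate_notin t Ht eta close l rho g y z ltac:(lra) Hrhol Ky Ey))
      as [a Ha].
    destruct (Leb z) as [V [HV HVb]]. exists V; split; [auto|].
    intros z' Wz'. apply HVb.
    pose proof (push_cover_small t Ht eta close g a (lam / 4) Ha z z'
                  (push_cover_of_translate t Ht g y z Ky Ey) Wz'). lra.
  - exists (push_cover t Ht), hs; split; [|split; [|split]].
    + intros h _; apply push_cover_open.
    + intros z; apply Hhsc; auto.
    + auto.
    + intros hs' z Hnd _ Hz. pose proof (push_cover_order t Ht hs' z Hnd Hz). lia.
Qed.

End BoundaryDimension.

Theorem corollary3p3
  (G : Group) (Xhat : MetricSpace) (Z : Xhat -> Prop)
  (act : G -> subspace Xhat (fun x => ~ Z x) -> subspace Xhat (fun x => ~ Z x))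
  (H1 : AR Xhat /\ compact_space Xhat)
  (H2 : Z_compactification Xhat Z)
  (H3 : is_action G _ act /\ proper_action G _ act /\ cocompact_action G _ act)
  (H4 : forall (C : subspace Xhat (fun x => ~ Z x) -> Prop)
               (U : (Xhat -> Prop) -> Prop),
          compact_set C -> open_cover U ->
          exists l : list G, forall g, ~ In g l ->
            exists V, U V /\ forall c, C c -> V (proj1_sig (act g c))) :
  finite_dimensional (subspace Xhat Z).
Proof.
  destruct H2 as [Xhat_compact [_ [Z_closed [H [H_cont [H_0 H_off_Z]]]]]].
  destruct H3 as [[act_one [act_mul act_cont]] [act_proper [K [K_compact K_cover]]]].
  destruct (compact_nbhd_in_open_subspace Xhat (fun x => ~ Z x) K Xhat_compact Z_closed K_compact)
    as [N [C [N_open [C_compact [K_N N_C]]]]].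
  destruct (act_proper C C_compact) as [lP lP_proper].
  exists (length lP).
  exact (boundary_covering_dim_le G Xhat Z act act_one act_mul act_cont Xhat_compact Z_closed
           H H_cont H_0 H_off_Z K N C lP K_cover K_N N_open N_C C_compact lP_proper
           (fun U => H4 C U C_compact)).
Qed.
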